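(* Assume the setting below. Fix $\boldsymbol\delta\in\mathbb R^n$ and $b\in\mathbb R$. Define $\tilde{\boldsymbol Y}^{\texttt{mp}}_{\boldsymbol Z,\boldsymbol\delta,b}(0)$ and $\tilde{\boldsymbol Y}^{\texttt{mn}}_{\boldsymbol Z,\boldsymbol\delta,b}(0)$ in $\overline{\mathbb R}^n$ by $$\tilde Y^{\texttt{mp}}_{\boldsymbol Z,\boldsymbol\delta,b,i}(0)=\begin{cases}\min\{Y_i-\delta_i,b\},& Z_i=1,M_i=1,\\ b,& Z_i=1,M_i=0,\\ Y_i,& Z_i=0,M_i=1,\\ b,& Z_i=0,M_i=0,\end{cases}\qquad \tilde Y^{\texttt{mn}}_{\boldsymbol Z,\boldsymbol\delta,b,i}(0)=\begin{cases}Y_i-\delta_i,& Z_i=1,M_i=1,\\ -\infty,& Z_i=1,M_i=0,\\ Y_i,& Z_i=0,M_i=1,\\ b,& Z_i=0,M_i=0.\end{cases}$$ (a) If $M_i(1)\ge M_i(0)$ for all $1\le i\le n$, then $\tilde p^{\texttt{mp}}_{\boldsymbol Z,\boldsymbol\delta,b}:=G_{\mathrm R,\phi}\big(t_{\mathrm R,\phi}(\boldsymbol Z,\tilde{\boldsymbol Y}^{\texttt{mp}}_{\boldsymbol Z,\boldsymbol\delta,b}(0))\big)$ is a valid p-value for $H_{\boldsymbol\delta}:\boldsymbol\tau=\boldsymbol\delta$. (b) If $M_i(1)\le M_i(0)$ for all $1\le i\le n$, then $\tilde p^{\texttt{mn}}_{\boldsymbol Z,\boldsymbol\delta,b}:=G_{\mathrm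 R,\phi}\big(t_{\mathrm R,\phi}(\boldsymbol Z,\tilde{\boldsymbol Y}^{\texttt{mn}}_{\boldsymbol Z,\boldsymbol\delta,b}(0))\big)$ is a valid p-value for $H_{\boldsymbol\delta}$. Here valid means: if $H_{\boldsymbol\delta}$ holds, $\mathbb P(p\le\alpha)\le\alpha$ for all $\alpha\in(0,1)$.
   Context: There are $n$ units. Unit $i$ has fixed potential outcomes $Y_i^\star(0),Y_i^\star(1)\in\mathbb R$ and fixed potential missingness indicators $M_i(0),M_i(1)\in\{0,1\}$; $\tau_i=Y_i^\star(1)-Y_i^\star(0)$, $\boldsymbol\tau=(\tau_1,\dots,\tau_n)^\intercal$. The assignment $\boldsymbol Z\in\{0,1\}^n$ is drawn from a completely randomized experiment (CRE): for fixed positive integers $n_1,n_0$, $n_1+n_0=n$, $\boldsymbol Z$ is uniform over vectors in $\{0,1\}^n$ with exactly $n_1$ ones, independently of all potential outcomes and missingness indicators; probabilities are over $\boldsymbol Z$. Observed missingness $M_i=Z_iM_i(1)+(1-Z_i)M_i(0)$; the realized outcome $Z_iY_i^\star(1)+(1-Z_i)Y_i^\star(0)$ is observed, and denoted $Y_i$, only when $M_i=1$. Test statistics: $\overline{\mathbb R}=\mathbb R\cup\{\pm\infty\}$; $\psi_{i,j}(y,y')=\mathbf 1\{y>y'\}+\mathbf 1\{y=y'\}\mathbf 1\{i\ge j\}$ for $y,y'\in\overline{\mathbb R}$; $\mathrm{rank}_i(\boldsymbol y)=\sum_{j=1}^n\psi_{i,j}(y_i,y_j)$. $\phi$ is a fixed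 nondecreasing real function on the nonnegative integers. $t_{\mathrm R,\phi}(\boldsymbol z,\boldsymbol y)$ is either $\sum_i z_i\phi(\mathrm{rank}_i(\boldsymbol y))$ or $\sum_i z_i\phi\big(\sum_j(1-z_j)\psi_{i,j}(y_i,y_j)\big)$; the result holds for either. $G_{\mathrm R,\phi}(c)=\mathbb P(t_{\mathrm R,\phi}(\boldsymbol A,\boldsymbol y_0)\ge c)$ with $\boldsymbol A$ from the CRE and $\boldsymbol y_0\in\mathbb R^n$ any fixed vector (independent of $\boldsymbol y_0$). *)

From HB Require Import structures.
From mathcomp Require Import all_boot all_order all_algebra.
From mathcomp Require Import reals constructive_ereal.
Unset Printing Implicit Defensive.
Import Order.TTheory GRing.Theory Num.Theory.
Local Open Scope ring_scope.

Section Defs.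
Variable R : realType.

Definition psi (n : nat) (i j : 'I_n) (y y' : \bar R) : nat :=
  ((y' < y)%E : nat) + ((y == y') && (j <= i)%N : nat).

Definition rank (n : nat) (y : 'I_n -> \bar R) (i : 'I_n) : nat :=
  (\sum_(j < n) psi n i j (y i) (y j))%N.

Definition t_R (n : nat) (phi : nat -> R) (form : bool)
    (z : {ffun 'I_n -> bool}) (y : 'I_n -> \bar R) : R :=
  if form then \sum_(i < n) (z i)%:R * phi (rank n y i)
  else \sum_(i < n) (z i)%:R *
         phi (\sum_(j < n) ((~~ z j : nat) * psi n i j (y i) (y j)))%N.

(* Support of the completely randomized experiment: exactly n1 treated units *)
Definition CRE (n n1 : nat) : {set {ffun 'I_n -> bool}} :=
  [set z : {ffun 'I_n -> bool} | #|[pred i | z i]| == n1].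

Definition prob (n n1 : nat) (E : pred {ffun 'I_n -> bool}) : R :=
  #|[set z in CRE n n1 | E z]|%:R / #|CRE n n1|%:R.

Definition G (n n1 : nat) (phi : nat -> R) (form : bool) (y0 : 'I_n -> R)
    (c : R) : R :=
  prob n n1 (fun a => c <= t_R n phi form a (fun i => (y0 i)%:E)).

(* Observed missingness indicator M_i (true = outcome observed) *)
Definition Mobs (n : nat) (M1 M0 : 'I_n -> bool) (z : {ffun 'I_n -> bool})
    (i : 'I_n) : bool := if z i then M1 i else M0 i.

(* Realized outcome Z_i Y_i(1) + (1 - Z_i) Y_i(0) (used only when M_i = 1) *)
Definition Yobs (n : nat) (Y1 Y0 : 'I_n -> R) (z : {ffun 'I_n -> bool})
    (i : 'I_n) : R := if z i then Y1 i else Y0 i.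

Definition Ymp (n : nat) (Y1 Y0 : 'I_n -> R) (M1 M0 : 'I_n -> bool)
    (z : {ffun 'I_n -> bool}) (delta : 'I_n -> R) (b : R) (i : 'I_n) : \bar R :=
  if z i then
    (if Mobs n M1 M0 z i then (Num.min (Yobs n Y1 Y0 z i - delta i) b)%:E else b%:E)
  else
    (if Mobs n M1 M0 z i then (Yobs n Y1 Y0 z i)%:E else b%:E).

Definition Ymn (n : nat) (Y1 Y0 : 'I_n -> R) (M1 M0 : 'I_n -> bool)
    (z : {ffun 'I_n -> bool}) (delta : 'I_n -> R) (b : R) (i : 'I_n) : \bar R :=
  if z i then
    (if Mobs n M1 M0 z i then (Yobs n Y1 Y0 z i - delta i)%:E else -oo%E)
  else
    (if Mobs n M1 M0 z i then (Yobs n Y1 Y0 z i)%:E else b%:E).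

End Defs.

(* Ties being broken by the unit index, [rank y] is the position of (y_i, i) in a
   strict total order, hence a bijection onto {1, ..., n}.  Relabelling the units
   along the bijection between the orders of two vectors preserves the CRE, so the
   law of t_R(A, y) does not depend on y and G may be evaluated at any vector.
   Under H_delta with monotone missingness some vector Y, not depending on Z,
   bounds the imputed outcomes from above on treated units and from below on
   controls.  Raising treated values and lowering control values can only increase
   t_R (for the first statistic by Abel summation over the number of treated units
   ranked above each level), so the imputed p-value dominates the randomization
   p-value of t_R(Z, Y), which is valid because Y is fixed. *)

From HB Require Import structures.
From mathcomp Require Import all_boot all_order all_algebra.
From mathcomp Require Import reals constructive_ereal.
Import Order.TTheory GRing.Theory Num.Theory.
Set Implicit Arguments.
Unset Strict Implicit.
Local Open Scope ring_scope.

Section Ranks.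
Variables (R : realType) (n : nat).
Implicit Types (y : 'I_n -> \bar R) (i j : 'I_n).

Definition key y i : \bar R *l nat := (y i, val i).

Lemma key_inj y : injective (key y).
Proof. by move=> i j /(congr1 snd) /val_inj. Qed.

Lemma psi_key y i j : psi R n i j (y i) (y j) = (key y j <= key y i)%O.
Proof. by rewrite /psi lexi_pair /=; case: ltgtP. Qed.

Lemma key_le_shift y y' i j : (y i <= y' i)%E -> (y' j <= y j)%E ->
  (key y j <= key y i)%O -> (key y' j <= key y' i)%O.
Proof.
rewrite !lexi_pair /= => hi hj /andP[yji /implyP tie].
rewrite (le_trans hj (le_trans yji hi)) /=; apply/implyP => y'ij.
by apply: tie; rewrite (le_trans hi (le_trans y'ij hj)).
Qed.

Lemma rankE y i : rank R n y i = #|[set j | (key y j <= key y i)%O]|.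
Proof.
rewrite -sum1dep_card big_mkcond; apply: eq_bigr => j _.
by rewrite psi_key; case: ifP.
Qed.

Lemma leq_rank y i j : (rank R n y j <= rank R n y i)%N = (key y j <= key y i)%O.
Proof.
rewrite !rankE; case: (leP (key y j) (key y i)) => [ji | ij].
  apply/subset_leq_card/subsetP => k; rewrite !inE => kj.
  exact: le_trans ji.
apply/negbTE; rewrite -ltnNge; apply/proper_card/properP; split.
  by apply/subsetP => k; rewrite !inE => ki; apply: le_trans (ltW ij).
by exists j; rewrite !inE ?lexx // leNgt ij.
Qed.

Lemma rank_inj y : injective (rank R n y).
Proof.
move=> i j eq_ij; apply: (@key_inj y); apply/le_anti.
by rewrite -!leq_rank eq_ij leqnn.
Qed.

Lemma rank_gt0 y i : (0 < rank R n y i)%N.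
Proof. by rewrite rankE card_gt0; apply/set0Pn; exists i; rewrite inE. Qed.

Lemma rank_le_n y i : (rank R n y i <= n)%N.
Proof. by rewrite rankE -[X in (_ <= X)%N]card_ord max_card. Qed.

Lemma rank_pred_lt y i : ((rank R n y i).-1 < n)%N.
Proof. by rewrite prednK ?rank_gt0 ?rank_le_n. Qed.

Definition rank_ord y i : 'I_n := Ordinal (rank_pred_lt y i).

Lemma rank_ordS y i : (rank_ord y i).+1 = rank R n y i.
Proof. exact/prednK/rank_gt0. Qed.

Lemma rank_ord_inj y : injective (rank_ord y).
Proof. by move=> i j /(congr1 (fun k : 'I_n => k.+1)); rewrite !rank_ordS => /rank_inj. Qed.

Lemma exists_rank_relabel y y' :
  exists2 s : 'I_n -> 'I_n, injective s & forall i, rank R n y' (s i) = rank R n y i.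
Proof.
have rK := f_invF (@rank_ord_inj y').
exists (invF (@rank_ord_inj y') \o rank_ord y) => [|i].
  exact/inj_comp/rank_ord_inj/(can_inj rK).
by rewrite /= -[in LHS]rank_ordS rK rank_ordS.
Qed.

End Ranks.

Section TailCounts.
Variables (R : numDomainType) (phi : nat -> R).

Lemma sum_tail_counts (I : finType) (P : pred I) (r : I -> nat) (N : nat) :
  (forall i, r i <= N)%N ->
  \sum_(i | P i) phi (r i) = \sum_(i | P i) phi 0 +
    \sum_(m < N) #|[set i | P i & (m < r i)%N]|%:R * (phi m.+1 - phi m).
Proof.
move=> rN.
have phi_telescope i : phi (r i) =
    phi 0 + \sum_(m < N) (m < r i)%N%:R * (phi m.+1 - phi m).
  rewrite -(big_mkord xpredT (fun m => (m < r i)%N%:R * (phi m.+1 - phi m))).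
  rewrite -[phi (r i)](subrK (phi 0)) -(telescope_sumr _ (leq0n (r i))) addrC.
  rewrite (big_nat_widen _ _ _ _ _ (rN i)) big_mkcondr /=.
  by congr (_ + _); apply: eq_bigr => m _; case: ltnP; rewrite ?mul1r ?mul0r.
under eq_bigr => i _ do rewrite phi_telescope.
rewrite big_split /=; congr (_ + _); rewrite exchange_big /=.
apply: eq_bigr => m _; rewrite -mulr_suml -sum1dep_card natr_sum big_mkcondr /=.
by congr (_ * _); apply: eq_bigr => i _; case: ifP.
Qed.

Lemma ler_sum_tail_counts (I : finType) (P : pred I) (r r' : I -> nat) (N : nat) :
  {homo phi : x y / (x <= y)%N >-> x <= y} ->
  (forall i, r i <= N)%N -> (forall i, r' i <= N)%N ->
  (forall m, #|[set i | P i & (m < r i)%N]| <= #|[set i | P i & (m < r' i)%N]|)%N ->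
  \sum_(i | P i) phi (r i) <= \sum_(i | P i) phi (r' i).
Proof.
move=> phi_homo rN r'N tails.
rewrite (sum_tail_counts _ rN) (sum_tail_counts _ r'N) lerD2l.
apply: ler_sum => m _; apply: ler_wpM2r; last by rewrite ler_nat.
by rewrite subr_ge0 phi_homo.
Qed.

End TailCounts.

Section RankStatistic.
Variables (R : realType) (n : nat) (phi : nat -> R) (form : bool).
Implicit Types (y : 'I_n -> \bar R) (z a : {ffun 'I_n -> bool}).

Lemma t_R_relabel y y' (s : 'I_n -> 'I_n) a :
  injective s -> (forall i, rank R n y' (s i) = rank R n y i) ->
  t_R R n phi form [ffun i => a (s i)] y = t_R R n phi form a y'.
Proof.
move=> s_inj rank_s.
have psi_s i j : psi R n i j (y i) (y j) = psi R n (s i) (s j) (y' (s i)) (y' (s j)).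
  by rewrite !psi_key -!leq_rank !rank_s.
rewrite /t_R; case: form; rewrite [RHS](reindex_inj s_inj); apply: eq_bigr => i _.
  by rewrite ffunE rank_s.
rewrite ffunE [in RHS](reindex_inj s_inj); congr (_ * phi _).
by apply: eq_bigr => j _; rewrite ffunE psi_s.
Qed.

Lemma card_rank_gt_shift y y' (z : pred 'I_n) m :
  (forall i, z i -> (y i <= y' i)%E) -> (forall i, ~~ z i -> (y' i <= y i)%E) ->
  (#|[set i | z i & m < rank R n y i]| <= #|[set i | z i & m < rank R n y' i]|)%N.
Proof.
move=> up down.
have split_z y1 : #|[set i | (m < rank R n y1 i)%N]| =
    (#|[set i | z i & (m < rank R n y1 i)%N]| + #|[set i | ~~ z i & (m < rank R n y1 i)%N]|)%N.
  by rewrite -(cardsID [set i | z i]); congr (_ + _)%N; apply: eq_card => i;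
    rewrite !inE andbC.
have card_upper : #|[set i | (m < rank R n y i)%N]| = #|[set i | (m < rank R n y' i)%N]|.
  have [s s_inj rank_s] := exists_rank_relabel y y'.
  rewrite -[RHS](card_preimset _ s_inj); apply: eq_card => i.
  by rewrite !inE rank_s.
(* If some treated unit leaves the top [n - m] ranks, every control in the new
   top was already in the old one. *)
case: (pickP [pred t | z t && (m < rank R n y t)%N && ~~ (m < rank R n y' t)%N]).
  move=> t /= /andP[/andP[zt yt] y't].
  suff controls : (#|[set i | ~~ z i & (m < rank R n y' i)%N]| <=
                   #|[set i | ~~ z i & (m < rank R n y i)%N]|)%N.
    by rewrite -(leq_add2r #|[set i | ~~ z i & (m < rank R n y i)%N]|) -split_z
      card_upper split_z leq_add2l.
  apply/subset_leq_card/subsetP => c; rewrite !inE => /andP[zc y'c].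
  rewrite zc /= ltnNge; apply/negP => yc.
  have c_le_t : (rank R n y' c <= rank R n y' t)%N.
    rewrite leq_rank; apply: key_le_shift (up _ zt) (down _ zc) _.
    by rewrite -leq_rank (leq_trans yc (ltnW yt)).
  by move: y'c; rewrite ltnNge (leq_trans c_le_t) // leqNgt.
move=> no_drop; apply/subset_leq_card/subsetP => i; rewrite !inE => /andP[zi yi].
by move: (no_drop i) => /=; rewrite zi yi /= => /negbFE ->.
Qed.

Lemma t_R_shift y y' z :
  {homo phi : x y / (x <= y)%N >-> x <= y} ->
  (forall i, z i -> (y i <= y' i)%E) -> (forall i, ~~ z i -> (y' i <= y i)%E) ->
  t_R R n phi form z y <= t_R R n phi form z y'.
Proof.
move=> phi_homo up down; rewrite /t_R; case: form.
  have sum_treated (F : 'I_n -> R) : \sum_(i < n) (z i)%:R * F i = \sum_(i | z i) F i.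
    by rewrite [RHS]big_mkcond; apply: eq_bigr => i _; case: (z i); rewrite ?mul1r ?mul0r.
  rewrite !sum_treated; apply: ler_sum_tail_counts => // [i|i|m].
  - exact: rank_le_n.
  - exact: rank_le_n.
  - exact: card_rank_gt_shift.
apply: ler_sum => i _; case: (boolP (z i)) => zi; last by rewrite !mul0r.
rewrite !mul1r; apply/phi_homo/leq_sum => j _.
case: (boolP (z j)) => //= zj; rewrite !mul1n !psi_key.
by case: (key y j <= key y i)%O / boolP => // /(key_le_shift (up _ zi) (down _ zj)) ->.
Qed.

End RankStatistic.

Section Randomization.
Variables (R : realType) (n n1 : nat).
Implicit Types (E F : pred {ffun 'I_n -> bool}) (a z : {ffun 'I_n -> bool}).

Lemma prob_subset E F :
  (forall z, z \in CRE n n1 -> E z -> F z) -> prob R n n1 E <= prob R n n1 F.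
Proof.
move=> EF; rewrite /prob ler_wpM2r ?invr_ge0 // ler_nat.
apply/subset_leq_card/subsetP => z /setIdP[zC Ez].
by apply/setIdP; split; last exact: EF.
Qed.

Lemma prob_pvalue_le (T : {ffun 'I_n -> bool} -> R) alpha : 0 <= alpha ->
  prob R n n1 (fun z => prob R n n1 (fun a => T z <= T a) <= alpha) <= alpha.
Proof.
move=> alpha_ge0.
set rejected := [set z in CRE n n1 | prob R n n1 (fun a => T z <= T a) <= alpha].
have [rejected0 | [z0 z0_rej]] := set_0Vmem rejected.
  by rewrite /prob -/rejected rejected0 cards0 mul0r.
have [zm zm_rej zm_min] := arg_minP T z0_rej.
apply: le_trans (_ : prob R n n1 (fun a => T zm <= T a) <= alpha); last first.
  by case/setIdP: zm_rej.
rewrite /prob -/rejected ler_wpM2r ?invr_ge0 // ler_nat.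
apply/subset_leq_card/subsetP => z z_rej; apply/setIdP; split; last exact: zm_min.
by case/setIdP: z_rej.
Qed.

Section Relabel.
Variables (s : 'I_n -> 'I_n) (s_inj : injective s).

Definition relabel a : {ffun 'I_n -> bool} := [ffun i => a (s i)].

Lemma relabel_inj : injective relabel.
Proof.
move=> a b /ffunP eq_ab; apply/ffunP => k.
by have := eq_ab (invF s_inj k); rewrite !ffunE f_invF.
Qed.

Lemma card_relabel a : #|[pred i | relabel a i]| = #|[pred i | a i]|.
Proof.
transitivity #|s @^-1: [set i | a i]|; first by apply: eq_card => i; rewrite !inE ffunE.
by rewrite card_preimset //; apply: eq_card => i; rewrite inE.
Qed.

End Relabel.

Variables (phi : nat -> R) (form : bool).

Lemma G_invariant y0 (y : 'I_n -> \bar R) c :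
  G R n n1 phi form y0 c = prob R n n1 (fun a => c <= t_R R n phi form a y).
Proof.
have [s s_inj rank_s] := exists_rank_relabel (fun i => (y0 i)%:E) y.
rewrite /G /prob -(card_preimset _ (relabel_inj s_inj)); congr (_%:R / _).
apply: eq_card => a.
by rewrite !in_set card_relabel // /relabel (t_R_relabel _ _ _ s_inj rank_s).
Qed.

Lemma imputed_pvalue_le y0 (Yimp : {ffun 'I_n -> bool} -> 'I_n -> \bar R)
    (Y : 'I_n -> \bar R) alpha :
  {homo phi : x y / (x <= y)%N >-> x <= y} -> 0 <= alpha ->
  (forall z i, z i -> (Yimp z i <= Y i)%E) -> (forall z i, ~~ z i -> (Y i <= Yimp z i)%E) ->
  prob R n n1 (fun z => G R n n1 phi form y0 (t_R R n phi form z (Yimp z)) <= alpha)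
    <= alpha.
Proof.
move=> phi_homo alpha_ge0 below above.
apply: le_trans (prob_pvalue_le (fun z => t_R R n phi form z Y) alpha_ge0).
apply: prob_subset => z _; apply: le_trans.
rewrite !(G_invariant y0 Y); apply: prob_subset => a _; apply: le_trans.
exact: t_R_shift phi_homo (below z) (above z).
Qed.

End Randomization.

Theorem theorem3 (R : realType) (n n1 n0 : nat)
    (Y1 Y0 : 'I_n -> R) (M1 M0 : 'I_n -> bool)
    (phi : nat -> R) (form : bool) (y0 : 'I_n -> R)
    (delta : 'I_n -> R) (b : R) :
  (0 < n1)%N -> (0 < n0)%N -> (n1 + n0)%N = n ->
  {homo phi : x y / (x <= y)%N >-> x <= y} ->
  (forall i, Y1 i - Y0 i = delta i) ->
  ((forall i, (M0 i <= M1 i)%N) ->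
     forall alpha : R, 0 < alpha < 1 ->
       prob R n n1 (fun z => G R n n1 phi form y0
                      (t_R R n phi form z (Ymp R n Y1 Y0 M1 M0 z delta b)) <= alpha)
       <= alpha)
  /\
  ((forall i, (M1 i <= M0 i)%N) ->
     forall alpha : R, 0 < alpha < 1 ->
       prob R n n1 (fun z => G R n n1 phi form y0
                      (t_R R n phi form z (Ymn R n Y1 Y0 M1 M0 z delta b)) <= alpha)
       <= alpha).
Proof.
move=> _ _ _ phi_homo null_delta.
have Y1_delta i : Y1 i - delta i = Y0 i by rewrite -null_delta opprB addrC subrK.
split=> M_mono alpha /andP[/ltW alpha_ge0 _].
  apply: (imputed_pvalue_le (Y := fun i =>
            (if M0 i then Y0 i else if M1 i then Num.min (Y0 i) b else b)%:E)
           n1 form y0 phi_homo alpha_ge0) => z i zi;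
  rewrite /Ymp /Mobs /Yobs ?(negbTE zi) ?zi ?Y1_delta; move: (M_mono i);
  by case: (M0 i) (M1 i) => -[] //= _; rewrite lee_fin ?ge_min ?lexx ?orbT.
apply: (imputed_pvalue_le (Y := fun i => (if M0 i then Y0 i else b)%:E)
         n1 form y0 phi_homo alpha_ge0) => z i zi;
rewrite /Ymn /Mobs /Yobs ?(negbTE zi) ?zi ?Y1_delta; move: (M_mono i);
by case: (M0 i) (M1 i) => -[] //= _; rewrite ?leNye.
Qed.
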